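(* For every integer $m\geq 1$ and every real $x>0$, $$\frac{x}{2m^2(1+\sqrt{x})^3}(1+\sqrt{x})^{2m}\leq \beta_m(x)\leq (1+\sqrt{x})^{2m},$$ where $\beta_m(x)=\sum_{\ell=1}^m N(m,\ell)x^\ell$ and $N(m,\ell)=\frac{1}{m}\binom{m}{\ell-1}\binom{m}{\ell}$. *)

From mathcomp Require Import all_boot all_order all_algebra.
From mathcomp Require Import reals.
Set Implicit Arguments. Unset Strict Implicit. Unset Printing Implicit Defensive.
Import Order.TTheory GRing.Theory Num.Theory.
Local Open Scope ring_scope.

Definition narayana (R : realType) (m l : nat) : R :=
  (m%:R)^-1 * ('C(m, l.-1))%:R * ('C(m, l))%:R.

Definition beta (R : realType) (m : nat) (x : R) : R :=
  \sum_(1 <= l < m.+1) narayana R m l * x ^+ l.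

(* Put s = sqrt x and a_k = C(m,k) s^k, so that (1 + s)^m = sum_k a_k and
   m beta_m(x) = s sum_k a_k a_(k+1).  Since N(m,l) <= C(m,l)^2, beta_m(x) is at
   most sum_k a_k^2 <= (sum_k a_k)^2, the upper bound.  For the lower bound,
   C(m,k) <= C(m,k-1) + C(m,k+1) gives s sum_k a_k^2 <= (1 + s^2) sum_k a_k a_(k+1),
   and Cauchy-Schwarz (sum_k a_k)^2 <= (m + 1) sum_k a_k^2 then yields
   s (1 + s)^(2m) <= (m + 1)(1 + s^2) sum_k a_k a_(k+1)
                  <= 2m (1 + s)^3 sum_k a_k a_(k+1). *)

From mathcomp Require Import all_boot all_order all_algebra.
From mathcomp Require Import zify ring lra reals.
Import Order.TTheory GRing.Theory Num.Theory.
Set Implicit Arguments. Unset Strict Implicit. Unset Printing Implicit Defensive.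

Lemma leq_binS_add m k : 'C(m, k.+1) <= 'C(m, k) + 'C(m, k.+2).
Proof.
case: m => [|n]; first by rewrite bin0n.
by rewrite [X in X <= _]binS addnC leq_add ?leq_bin2l // binS leq_addl.
Qed.

Lemma leq_bin_mul_binS m l : l < m -> 'C(m, l) <= m * 'C(m, l.+1).
Proof.
move=> lt_lm; apply: (@leq_trans ((m - l) * 'C(m, l))).
  by rewrite leq_pmull // subn_gt0.
by rewrite -mul_bin_left leq_mul2r lt_lm orbT.
Qed.

Local Open Scope ring_scope.

Lemma sqr_sum_le_size_mul (R : realDomainType) (I : Type) (r : seq I) (F : I -> R) :
  (\sum_(i <- r) F i) ^+ 2 <= (size r)%:R * \sum_(i <- r) F i ^+ 2.
Proof.
elim: r => [|x r IH]; first by rewrite !big_nil expr0n mul0r.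
rewrite !big_cons /= -natr1.
set S := \sum_(i <- r) F i in IH *; set T := \sum_(i <- r) F i ^+ 2 in IH *.
set N := (size r)%:R in IH *.
have T_ge0 : 0 <= T by apply: sumr_ge0 => i _; rewrite sqr_ge0.
suff cross : 2 * (F x * S) <= N * F x ^+ 2 + T by nra.
have [N0|N_gt0] := eqVneq N 0.
  have /eqP S0 : S == 0 by rewrite -sqrf_eq0 eq_le sqr_ge0 andbT -(mul0r T) -N0.
  by rewrite N0 S0 !mulr0 mul0r add0r.
have N_gt0' : 0 < N by rewrite lt_def N_gt0 ler0n.
rewrite -(ler_pM2l N_gt0'); have := sqr_ge0 (N * F x - S); nra.
Qed.

Lemma sum_sqr_le_sqr_sum (R : realDomainType) (I : Type) (r : seq I) (F : I -> R) :
  (forall i, 0 <= F i) -> \sum_(i <- r) F i ^+ 2 <= (\sum_(i <- r) F i) ^+ 2.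
Proof.
move=> F_ge0; elim: r => [|x r IH]; first by rewrite !big_nil expr0n.
rewrite !big_cons.
have := F_ge0 x; have : 0 <= \sum_(i <- r) F i by apply: sumr_ge0.
nra.
Qed.

Section BinomialTerms.
Variables (R : realDomainType) (m : nat) (s : R).

Definition binom_term k : R := 'C(m, k)%:R * s ^+ k.

Lemma sum_binom_term : \sum_(0 <= k < m.+1) binom_term k = (1 + s) ^+ m.
Proof.
by rewrite addrC exprD1n big_mkord; apply: eq_bigr => k _; rewrite /binom_term mulr_natl.
Qed.

Lemma sum_binom_term_adj_recl :
  \sum_(0 <= k < m) binom_term k * binom_term k.+1 =
  binom_term 0 * binom_term 1 + \sum_(0 <= k < m) binom_term k.+1 * binom_term k.+2.
Proof.
have last0 : binom_term m * binom_term m.+1 = 0.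
  by rewrite /binom_term (@bin_small m m.+1) // mul0r mulr0.
transitivity (\sum_(0 <= k < m.+1) binom_term k * binom_term k.+1).
  by rewrite big_nat_recr //= last0 addr0.
by rewrite big_nat_recl.
Qed.

Hypothesis s_ge0 : 0 <= s.

Lemma binom_term_ge0 k : 0 <= binom_term k.
Proof. by rewrite mulr_ge0 ?exprn_ge0. Qed.

Lemma binom_term_sqr_le k :
  s * binom_term k.+1 ^+ 2 <=
  s ^+ 2 * (binom_term k * binom_term k.+1) + binom_term k.+1 * binom_term k.+2.
Proof.
rewrite /binom_term.
have -> : s ^+ k.+2 = s * (s * s ^+ k) by rewrite !exprS.
rewrite (exprS s k); set p := s ^+ k.
set C0 := 'C(m, k)%:R; set C1 := 'C(m, k.+1)%:R; set C2 := 'C(m, k.+2)%:R.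
have -> : s * (C1 * (s * p)) ^+ 2 = C1 * C1 * (s ^+ 3 * p ^+ 2) by ring.
have -> : s ^+ 2 * (C0 * p * (C1 * (s * p))) + C1 * (s * p) * (C2 * (s * (s * p)))
    = C1 * (C0 + C2) * (s ^+ 3 * p ^+ 2) by ring.
rewrite ler_wpM2r ?mulr_ge0 ?exprn_ge0 // ler_wpM2l ?ler0n //.
by rewrite -natrD ler_nat leq_binS_add.
Qed.

Lemma sum_sqr_binom_term_le : (1 <= m)%N ->
  s * \sum_(0 <= k < m.+1) binom_term k ^+ 2 <=
  (1 + s ^+ 2) * \sum_(0 <= k < m) binom_term k * binom_term k.+1.
Proof.
move=> m_gt0.
have first_le : s * binom_term 0 ^+ 2 <= binom_term 0 * binom_term 1.
  by rewrite /binom_term bin0 bin1 !expr0 expr1 !mul1r expr1n mulr1 ler_peMl // ler1n.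
set Q := \sum_(0 <= k < m) _.
rewrite big_nat_recl // mulrDr mulrDl mul1r {1}/Q sum_binom_term_adj_recl -addrA.
rewrite lerD // addrC /Q !mulr_sumr -big_split /= !big_nat ler_sum // => k _.
exact: binom_term_sqr_le.
Qed.

Lemma sqr_sum_binom_term_le : (1 <= m)%N ->
  s * (\sum_(0 <= k < m.+1) binom_term k) ^+ 2 <=
  2 * m%:R * (1 + s) ^+ 3 * \sum_(0 <= k < m) binom_term k * binom_term k.+1.
Proof.
have cube_ge : 1 + s ^+ 2 <= (1 + s) ^+ 3 by have := s_ge0; nra.
move=> m_gt0; set Q := \sum_(0 <= k < m) _.
have Q_ge0 : 0 <= Q by apply: sumr_ge0 => k _; rewrite mulr_ge0 ?binom_term_ge0.
have := sqr_sum_le_size_mul (index_iota 0 m.+1) binom_term.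
rewrite size_iota subn0 => cauchy_schwarz.
apply: (le_trans (ler_wpM2l s_ge0 cauchy_schwarz)); rewrite mulrCA.
apply: (le_trans (ler_wpM2l (ler0n _ _) (sum_sqr_binom_term_le m_gt0))).
rewrite mulrA ler_wpM2r // ler_pM ?ler0n ?addr_ge0 ?sqr_ge0 //.
have : (1 : R) <= m%:R by rewrite ler1n.
by rewrite -natr1; lra.
Qed.
End BinomialTerms.

Lemma narayana_le_sqr_bin (R : realType) m l :
  (0 < l <= m)%N -> narayana R m l <= 'C(m, l)%:R ^+ 2.
Proof.
case: l => [|l] // /andP[_ lt_lm]; have m_gt0 : (0 < m)%N by apply: leq_trans lt_lm.
rewrite /narayana /= expr2 ler_wpM2r ?ler0n // ler_pdivrMl ?ltr0n //.
by rewrite -natrM ler_nat leq_bin_mul_binS.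
Qed.

Lemma beta_sqr_le (R : realType) m (s : R) :
  beta m (s ^+ 2) <= \sum_(0 <= k < m.+1) binom_term m s k ^+ 2.
Proof.
rewrite /beta (big_ltn (ltn0Sn m)) -[X in X <= _]add0r lerD ?sqr_ge0 //.
rewrite !big_nat ler_sum // => l /andP[l_gt0 lt_lm].
rewrite /binom_term !exprMn -expr2 ler_wpM2r ?sqr_ge0 //.
by rewrite narayana_le_sqr_bin // l_gt0 -ltnS.
Qed.

Lemma beta_sqr (R : realType) m (s : R) : (0 < m)%N ->
  m%:R * beta m (s ^+ 2) = s * \sum_(0 <= k < m) binom_term m s k * binom_term m s k.+1.
Proof.
move=> m_gt0; rewrite /beta big_add1 /= !mulr_sumr; apply: eq_bigr => k _.
rewrite /narayana /binom_term /= -exprM !mulrA mulfV ?pnatr_eq0 -?lt0n // mul1r.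
have -> : (2 * k.+1 = k + k.+1 + 1)%N by lia.
rewrite !exprD expr1; ring.
Qed.

Theorem lemma1 (R : realType) (m : nat) (x : R) (hm : (1 <= m)%N) (hx : 0 < x) :
  x / (2 * (m%:R) ^+ 2 * (1 + Num.sqrt x) ^+ 3) * (1 + Num.sqrt x) ^+ (2 * m)
    <= beta m x
  /\ beta m x <= (1 + Num.sqrt x) ^+ (2 * m).
Proof.
set s := Num.sqrt x; have s_ge0 : 0 <= s := sqrtr_ge0 x.
have -> : x = s ^+ 2 by rewrite sqr_sqrtr ?ltW.
rewrite mulnC exprM -(@sum_binom_term _ m s).
split; last first.
  exact: le_trans (beta_sqr_le m s) (sum_sqr_le_sqr_sum _ (binom_term_ge0 m s_ge0)).
rewrite mulrAC ler_pdivrMr ?mulr_gt0 ?exprn_gt0 ?ltr0n ?ltr_pwDl //.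
have -> : beta m (s ^+ 2) * (2 * m%:R ^+ 2 * (1 + s) ^+ 3) =
          m%:R * beta m (s ^+ 2) * (2 * m%:R * (1 + s) ^+ 3) by ring.
rewrite beta_sqr //; have := ler_wpM2l s_ge0 (sqr_sum_binom_term_le s_ge0 hm).
nra.
Qed.
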